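(* Let $L$ be a finite list, $g: L\to\{0,1\}$ a Boolean function and $\epsilon > 0$, and let $c_q$ be the number of queries to $g$ required to implement the oracle $\mathcal{O}_g|x\rangle|0\rangle = |x\rangle|g(x)\rangle$. Then, with probability of failure at most $\epsilon$, the algorithm $\textbf{QSearch}_{\text{Zalka}}$ requires at most $$W_{\textbf{QSearch}_{\text{Zalka}}}(|L|,\epsilon) := c_q\left(5\left\lceil \frac{\ln(1/\epsilon)}{2\ln(4/3)}\right\rceil + \pi\sqrt{|L|}\sqrt{\left\lceil \frac{\ln(1/\epsilon)}{2\ln(4/3)}\right\rceil}\right)$$ queries to $g$ to find a marked item of $L$ (an $x$ with $g(x)=1$), or otherwise to report that there is none.
   Context: Each use of $\mathcal{O}_g$ counts as $c_q$ queries to $g$. A Grover iteration is the unitary reflecting through the unmarked states (one query to $\mathcal{O}_g$) followed by a reflection through the uniform superposition over $L$; a Grover run with $j$ iterations prepares the uniform superposition, applies $j$ Grover iterations, measures, and checks the outcome with one further query. Exact Grover search for a known number $t>0$ of marked items is a procedure that, when $L$ has exactly $t$ marked items, returns a marked item with certainty using $\lfloor \frac{\pi}{4}\sqrt{|L|/t} - \frac12 \rceil + 1$ queries to $\mathcal{O}_g$ (where $\lfloor\cdot\rceil$ is the nearest integer). Algorithm $\textbf{QSearch}_{\text{Zalka}}$ with target failure probability $\epsilon$: let $t_0 = \lceil \frac{\ln\epsilon}{2\ln(3/4)}\rceil$. Step 1: for $t = 1, 2, \dots, t_0$, run exact Grover search assuming exactly $t$ marked items; if a marked item is found, return it and stop.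 Step 2: repeat $2t_0$ times: choose an integer $j$ uniformly at random from $[0, \lceil \frac{\pi}{4}\sqrt{|L|/t_0}\rceil]$ and perform a Grover run with $j$ iterations; if a marked item is found, return it and stop. If nothing is found, return ''no marked item''. *)

From HB Require Import structures.
From mathcomp Require Import all_boot all_order all_algebra.
From mathcomp Require Import all_classical all_reals all_analysis.
Set Implicit Arguments. Unset Strict Implicit. Unset Printing Implicit Defensive.
Import Order.TTheory GRing.Theory Num.Theory.
Local Open Scope ring_scope.

Section QSearch.
Variables (R : realType) (T : finType).

Definition NL : nat := #|T|.

Definition nearest (y : R) : int := Num.floor (y + 2^-1).

Definition t0Z (eps : R) : int := Num.ceil (ln eps / (2 * ln (3 / 4))).
Definition t0 (eps : R) : nat := `|t0Z eps|%N.

(* upper end of the random range in Step 2: ceil(pi/4 sqrt(|L|/t0)) *)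
Definition Jmax (eps : R) : nat :=
  `|Num.ceil ((pi : R) / 4 * Num.sqrt (NL%:R / (t0 eps)%:R))|%N.

(* queries to O_g of exact Grover search assuming t marked items *)
Definition exact_queries (t : nat) : nat :=
  (`|nearest ((pi : R) / 4 * Num.sqrt (NL%:R / t%:R) - 2^-1)|%N + 1)%N.

(* queries to O_g of a Grover run with j iterations (j iterations + check) *)
Definition run_queries (j : nat) : nat := (j + 1)%N.

(* An execution trace of QSearch_Zalka: Step 1 executed for t = 1..k, and
   Step 2 executed with the iteration counts js (in order).  The algorithm
   may stop at any point (as soon as a marked item is found). *)
Definition valid_trace (eps : R) (k : nat) (js : seq nat) : Prop :=
  [/\ (k <= t0 eps)%N, js != [::] -> k = t0 eps,
      (size js <= 2 * t0 eps)%N & all (fun j => j <= Jmax eps)%N js].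

Definition trace_oracle_uses (k : nat) (js : seq nat) : nat :=
  (\sum_(1 <= t < k.+1) exact_queries t + \sum_(j <- js) run_queries j)%N.

Definition W_Zalka (cq : nat) (eps : R) : R :=
  let t := (Num.ceil (ln (1 / eps) / (2 * ln (4 / 3))))%:~R in
  cq%:R * (5 * t + (pi : R) * Num.sqrt NL%:R * Num.sqrt t).

Definition qstate := T -> R.
Definition uniform : qstate := fun _ => 1 / Num.sqrt NL%:R.
(* reflection through the unmarked states (one use of O_g) *)
Definition refl_unmarked (g : T -> bool) (v : qstate) : qstate :=
  fun x => if g x then - v x else v x.
Definition refl_uniform (v : qstate) : qstate :=
  fun x => 2 * (\sum_y v y) / NL%:R - v x.
Definition grover_iter (g : T -> bool) (v : qstate) : qstate :=
  refl_uniform (refl_unmarked g v).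
Definition grover_state (g : T -> bool) (j : nat) : qstate :=
  iter j (grover_iter g) uniform.
(* probability that a Grover run with j iterations measures (and hence,
   after the check, returns) a marked item *)
Definition run_success (g : T -> bool) (j : nat) : R :=
  \sum_(x | g x) (grover_state g j x) ^+ 2.

(* Probability that QSearch_Zalka reports "no marked item".  p t is the
   probability that exact Grover search assuming t marked items returns a
   marked item; in Step 2 each of the 2 t0 runs picks j uniformly in
   [0, Jmax], independently. *)
Definition fail_prob (g : T -> bool) (p : nat -> R) (eps : R) : R :=
  (\prod_(1 <= t < (t0 eps).+1) (1 - p t)) *
  (1 - (\sum_(j < (Jmax eps).+1) run_success g j) / (Jmax eps).+1%:R)
    ^+ (2 * t0 eps).

End QSearch.

From HB Require Import structures.
From mathcomp Require Import all_boot all_order all_algebra.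
From mathcomp Require Import all_classical all_reals all_analysis.
From mathcomp Require Import ring lra.
Set Implicit Arguments.
Unset Strict Implicit.
Unset Printing Implicit Defensive.
Import Order.TTheory GRing.Theory Num.Theory.
Local Open Scope ring_scope.

(* Grover's iteration rotates the state by [2 th] in the plane spanned by the
   uniform superpositions over the marked and over the unmarked items, where
   [sin th ^+ 2 = m / |L|] is the fraction of marked items; a run with [j]
   iterations therefore succeeds with probability [sin ((2 j + 1) th) ^+ 2].
   If [m <= t0], Step 1 reaches [t = m] and succeeds with certainty.  Otherwise
   [t0 < m], and averaging over [j <= J] with [J >= pi/4 sqrt (|L| / t0)
   >= 1 / (2 sin th)] gives success probability at least [1/4] (a telescoping
   sum of cosines), so the [2 t0] runs of Step 2 all fail with probability at
   most [(3/4) ^ (2 t0) <= eps].  As for the cost, Step 1 makes at most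
   [sum_(t <= t0) (pi/4 sqrt (|L| / t) + 1) <= pi/2 sqrt (|L| t0) + t0] queries
   since [sum_(t <= t0) 1 / sqrt t <= 2 sqrt t0], and Step 2 at most
   [2 t0 (J + 1) <= pi/2 sqrt (|L| t0) + 4 t0]. *)

Section OddMultiples.
Variable R : realType.
Implicit Types (x y a th phi psi : R) (n : nat).

Lemma sin_mul_sum_cos_odd x n :
  2 * sin x * \sum_(j < n) cos ((2 * j%:R + 1) * x) = sin (2 * n%:R * x).
Proof.
elim: n => [|n IH]; first by rewrite big_ord0 !mulr0 mul0r sin0.
rewrite big_ord_recr /= mulrDr IH.
have -> : 2 * n.+1%:R * x = (2 * n%:R + 1) * x + x by rewrite -natr1; ring.
have -> : 2 * n%:R * x = (2 * n%:R + 1) * x - x by ring.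
rewrite sinB sinD; ring.
Qed.

Lemma sinDD a th : sin (a + th + th) = sin a + 2 * sin th * cos (a + th).
Proof.
set b := a + th; have -> : a = b - th by rewrite /b; ring.
rewrite sinB sinD; ring.
Qed.

Lemma cosDD a th : cos (a + th + th) = 2 * cos th * cos (a + th) - cos a.
Proof.
set b := a + th; have -> : a = b - th by rewrite /b; ring.
rewrite cosB cosD; ring.
Qed.

Lemma norm_sin_mulrn_le y n : `|sin (n%:R * y)| <= n%:R * `|sin y|.
Proof.
elim: n => [|n IH]; first by rewrite !mul0r sin0 normr0.
rewrite -natr1 mulrDl mul1r sinD mulrDl mul1r.
apply: le_trans (ler_normD _ _) _; rewrite !normrM; apply: lerD.
  by apply: le_trans _ IH; rewrite ler_piMr ?cos_max.
by rewrite ler_piMl ?cos_max.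
Qed.

(* With [y := pi / (2 n) < psi]: [1 = sin (n y) <= n sin y < n sin psi]. *)
Lemma mulrn_sin_gt1 psi n : 0 < psi <= pi / 2 -> pi < 2 * n%:R * psi ->
  1 < n%:R * sin psi.
Proof.
move=> /andP[psi_gt0 psi_le] pi_lt.
have pi_gt0 : 0 < pi :> R := pi_gt0 R.
have n_gt0 : 0 < n%:R :> R.
  by rewrite ltr0n lt0n; apply: contraTneq pi_lt => ->; rewrite mulr0 mul0r -leNgt ltW.
pose y : R := pi / (2 * n%:R).
have ny : n%:R * y = pi / 2 by rewrite /y; field; rewrite lt0r_neq0.
have y_gt0 : 0 < y by rewrite divr_gt0 ?mulr_gt0.
have y_lt : y < psi by rewrite ltr_pdivrMr ?mulr_gt0 // mulrC.
clearbody y.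
have sin_lt : sin y < sin psi.
  by rewrite ltr_sin // in_itv /=; apply/andP; split; lra.
have := norm_sin_mulrn_le y n.
rewrite ny sin_pihalf normr1 ger0_norm; last by apply: sin_ge0_pi; lra.
by move/le_lt_trans; apply; rewrite ltr_pM2l.
Qed.

Lemma sin_mul2n_le phi n : 0 < phi < pi ->
  (0 <= cos phi -> 1 <= n%:R * sin phi) -> sin (2 * n%:R * phi) <= n%:R * sin phi.
Proof.
move=> /andP[phi_gt0 phi_lt] hcos.
have [cos_ge0|cos_lt0] := lerP 0 (cos phi).
  exact: le_trans (sin_le1 _) (hcos cos_ge0).
set psi := pi - phi.
have psi_itv : 0 < psi <= pi / 2.
  rewrite /psi; apply/andP; split; first lra.
  rewrite leNgt; apply/negP => phi_small.
  have : 0 < cos phi by apply: cos_gt0_pihalf; apply/andP; split; lra.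
  lra.
have sin_psi : sin phi = sin psi by rewrite /psi sinB sinpi cospi; ring.
have sin_psi_gt0 : 0 < sin psi by apply: sin_gt0_pi; lra.
have -> : sin (2 * n%:R * phi) = - sin (2 * n%:R * psi).
  have -> : 2 * n%:R * phi = - (2 * n%:R * psi) + (pi *+ 2) *+ n.
    by rewrite /psi mulr2n -(mulr_natl (pi + pi) n); ring.
  by rewrite (periodicn (@sinD2pi R)) sinN.
rewrite sin_psi.
have [sin_ge0|sin_lt0] := lerP 0 (sin (2 * n%:R * psi)).
  have : 0 <= n%:R * sin psi by apply: mulr_ge0; rewrite ?ler0n ?ltW.
  lra.
have pi_lt : pi < 2 * n%:R * psi.
  rewrite ltNge; apply/negP => le_pi.
  have : 0 <= sin (2 * n%:R * psi).
    by apply: sin_ge0_pi; rewrite le_pi andbT mulr_ge0 ?mulr_ge0 ?ler0n //; lra.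
  lra.
have := mulrn_sin_gt1 psi_itv pi_lt; have := sin_geN1 (2 * n%:R * psi); lra.
Qed.

Lemma sum_cos_odd_le phi n : 0 <= phi <= pi ->
  (0 <= cos phi -> 1 <= n%:R * sin phi) ->
  \sum_(j < n) cos ((2 * j%:R + 1) * phi) <= n%:R / 2.
Proof.
move=> /andP[phi_ge0 phi_le] hcos.
have n_ge0 : 0 <= n%:R :> R := ler0n _ n.
have [->|phi_neq] := eqVneq phi pi.
  rewrite (eq_bigr (fun=> -1)) => [|j _]; last first.
    have -> : (2 * j%:R + 1) * pi = pi + (pi *+ 2) *+ j :> R.
      by rewrite mulr2n -(mulr_natl (pi + pi) j); ring.
    by rewrite (periodicn (@cosD2pi R)) cospi.
  rewrite sumr_const card_ord mulNrn; lra.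
have phi_gt0 : 0 < phi.
  rewrite lt_def phi_ge0 andbT; apply/eqP => phi0; move: hcos.
  by rewrite phi0 cos0 sin0 mulr0 => /(_ ler01); rewrite ler10.
have phi_itv : 0 < phi < pi by rewrite phi_gt0 lt_neqAle phi_neq.
have sin_gt0 : 0 < sin phi := sin_gt0_pi phi_itv.
have := sin_mul_sum_cos_odd phi n; have := sin_mul2n_le phi_itv hcos; nra.
Qed.

Lemma sum_sin_odd_sqr_ge th n : 0 < th <= pi / 2 ->
  1 / (2 * sin th) + 1 <= n%:R ->
  n%:R / 4 <= \sum_(j < n) sin ((2 * j%:R + 1) * th) ^+ 2.
Proof.
move=> /andP[th_gt0 th_le] n_ge.
have pi_gt0 : 0 < pi :> R := pi_gt0 R.
have s_gt0 : 0 < sin th by apply: sin_gt0_pi; lra.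
have sin_sqr j : sin ((2 * j%:R + 1) * th) ^+ 2 =
    (1 - cos ((2 * j%:R + 1) * (2 * th))) / 2.
  have -> : (2 * j%:R + 1) * (2 * th) = ((2 * j%:R + 1) * th) *+ 2.
    by rewrite mulr2n; ring.
  by rewrite cos_mulr2n sin2cos2; field.
under eq_bigr => j _ do rewrite sin_sqr.
rewrite -mulr_suml sumrB sumr_const card_ord.
suff : \sum_(j < n) cos ((2 * j%:R + 1) * (2 * th)) <= n%:R / 2 by lra.
apply: sum_cos_odd_le; first by apply/andP; split; lra.
have -> : 2 * th = th + th by ring.
rewrite cosD sinD => cos2_ge0.
set s := sin th in s_gt0 n_ge cos2_ge0 *; set c := cos th in cos2_ge0 *.
have c_ge0 : 0 <= c by apply: cos_ge0_pihalf; apply/andP; split; lra.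
have sc1 : s ^+ 2 + c ^+ 2 = 1 by rewrite addrC cos2Dsin2.
have n_ge' : 1 + 2 * s <= 2 * s * n%:R.
  have -> : 1 + 2 * s = 2 * s * (1 / (2 * s) + 1) by field; rewrite lt0r_neq0.
  by rewrite ler_wpM2l // mulr_ge0 // ltW.
have c_le1 : c <= 1 by nra.
have s_le_c : s <= c by nra.
have : (1 + 2 * s) * c <= 2 * s * n%:R * c by rewrite ler_wpM2r.
(* Since [s <= c <= 1]: [c + 2 s c >= c ^+ 2 + 2 s ^+ 2 = 1 + s ^+ 2]. *)
nra.
Qed.

End OddMultiples.

Section GroverRotation.
Variables (R : realType) (T : finType) (g : T -> bool).
Local Notation N := #|T|.
Local Notation m := #|[pred x | g x]|.

Lemma sum_marked_unmarked (u v : R) :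
  \sum_x (if g x then u else v) = m%:R * u + (N - m)%:R * v.
Proof.
rewrite (bigID g) /= -(cardC [pred x | g x]) addKn.
rewrite (eq_bigr (fun=> u)) => [|x ->] //.
rewrite [X in _ + X](eq_bigr (fun=> v)) => [|x /negbTE ->] //.
rewrite (sumr_const [pred x | g x]) (sumr_const [predC [pred x | g x]]).
by rewrite -(mulr_natl u) -(mulr_natl v).
Qed.

Hypothesis marked_gt0 : (0 < m)%N.

Definition grover_angle : R := asin (Num.sqrt (m%:R / N%:R)).
Local Notation th := grover_angle.
Local Notation rootN := (Num.sqrt (N%:R : R)).

Lemma rootN_gt0 : 0 < rootN.
Proof. by rewrite sqrtr_gt0 ltr0n (leq_trans marked_gt0 (max_card _)). Qed.

Lemma sqr_rootN : rootN ^+ 2 = N%:R.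
Proof. by rewrite sqr_sqrtr ?ler0n. Qed.

Lemma card_ratio_itv : 0 < (m%:R / N%:R : R) <= 1.
Proof.
have N_gt0 : (0 < N)%N := leq_trans marked_gt0 (max_card _).
by rewrite divr_gt0 ?ltr0n // ler_pdivrMr ?ltr0n // mul1r ler_nat max_card.
Qed.

Lemma sqrt_card_ratio_itv : -1 <= (Num.sqrt (m%:R / N%:R) : R) <= 1.
Proof.
have /andP[_ q_le1] := card_ratio_itv.
rewrite (le_trans _ (sqrtr_ge0 _)) ?lerN10 //=.
by move: q_le1; rewrite -(ler_sqrt _ ler01) sqrtr1.
Qed.

Lemma sin_grover_angle : sin th = Num.sqrt (m%:R / N%:R).
Proof. by apply: asinK; rewrite in_itv /= sqrt_card_ratio_itv. Qed.

Lemma sin_grover_angle_gt0 : 0 < sin th.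
Proof. by rewrite sin_grover_angle sqrtr_gt0; case/andP: card_ratio_itv. Qed.

Lemma grover_angle_itv : 0 < th <= pi / 2.
Proof.
have q_itv := sqrt_card_ratio_itv.
have th_in : th \in `[- (pi / 2), pi / 2] by rewrite in_itv /= asin_geNpi2 ?asin_lepi2.
have zero_in : (0 : R) \in `[- (pi / 2), pi / 2].
  by rewrite in_itv /=; apply/andP; split; have := pi_gt0 R; lra.
by rewrite -(ltr_sin zero_in th_in) sin0 sin_grover_angle_gt0 asin_lepi2.
Qed.

Lemma card_marked_sin : m%:R = rootN ^+ 2 * sin th ^+ 2.
Proof.
have /andP[q_gt0 _] := card_ratio_itv.
rewrite sin_grover_angle sqr_rootN sqr_sqrtr ?ltW // mulrC divfK //.
by rewrite lt0r_neq0 // -sqr_rootN exprn_gt0 // rootN_gt0.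
Qed.

Lemma card_unmarked_cos : (N - m)%:R = rootN ^+ 2 * cos th ^+ 2.
Proof. by rewrite natrB ?max_card // cos2sin2 card_marked_sin sqr_rootN; ring. Qed.

Lemma cos_grover_angle_neq0 x : ~~ g x -> cos th != 0.
Proof.
move=> gxN; apply/eqP => cos0.
have : (m < N)%N.
  rewrite -(cardC [pred x | g x]) -{1}[m]addn0 ltn_add2l.
  by apply/card_gt0P; exists x.
by rewrite -subn_gt0 -(ltr0n R) card_unmarked_cos cos0 expr0n mulr0 ltxx.
Qed.

(* After [j] iterations the state lies in the plane spanned by the uniform
   superpositions over the marked and over the unmarked items, at angle
   [(2 j + 1) th] from the latter: each iteration is a rotation by [2 th]. *)
Lemma grover_state_eq j x : grover_state R g j x =
  (if g x then sin ((2 * j%:R + 1) * th) / sin th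
   else cos ((2 * j%:R + 1) * th) / cos th) / rootN.
Proof.
have s_neq0 : sin th != 0 := lt0r_neq0 sin_grover_angle_gt0.
have n_neq0 : rootN != 0 := lt0r_neq0 rootN_gt0.
elim: j x => [|j IH] x.
  rewrite /grover_state /= /uniform /NL mulr0 add0r !mul1r.
  by case: ifP => [_|/negbT/cos_grover_angle_neq0 c_neq0]; rewrite divff // div1r.
rewrite /grover_state iterS -/(grover_state R g j) /grover_iter /refl_uniform.
rewrite /refl_unmarked /NL.
set a := (2 * j%:R + 1) * th.
have sum_eq : \sum_y (if g y then - grover_state R g j y else grover_state R g j y) =
    rootN * cos (a + th).
  rewrite (eq_bigr (fun y => if g y then - (sin a / sin th / rootN)
                             else cos a / cos th / rootN)) => [|y _]; last first.
    by rewrite IH; case: (g y).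
  rewrite sum_marked_unmarked card_marked_sin card_unmarked_cos cosD.
  have [->|c_neq0] := eqVneq (cos th) 0.
    by rewrite expr0n /= !mulr0 !mul0r addr0 sub0r; field; rewrite s_neq0 n_neq0.
  by field; rewrite s_neq0 c_neq0 n_neq0.
have -> : (2 * j.+1%:R + 1) * th = a + th + th by rewrite /a -natr1; ring.
rewrite sum_eq IH -/a; set n := rootN in n_neq0 *; rewrite -sqr_rootN -/n.
case: (boolP (g x)) => [_|/cos_grover_angle_neq0 c_neq0].
  by rewrite sinDD; field; rewrite s_neq0 n_neq0.
by rewrite cosDD; field; rewrite c_neq0 n_neq0.
Qed.

Lemma run_success_eq j : run_success R g j = sin ((2 * j%:R + 1) * th) ^+ 2.
Proof.
have s_neq0 : sin th != 0 := lt0r_neq0 sin_grover_angle_gt0.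
have n_neq0 : rootN != 0 := lt0r_neq0 rootN_gt0.
set a := (2 * j%:R + 1) * th.
rewrite /run_success (eq_bigr (fun=> (sin a / sin th / rootN) ^+ 2)) => [|x gx].
  rewrite (sumr_const [pred x | g x]) -(mulr_natl _ m) card_marked_sin.
  by field; rewrite s_neq0 n_neq0.
by rewrite grover_state_eq gx.
Qed.

Lemma sum_run_success_ge t M : (0 < t <= m)%N ->
  (pi : R) / 4 * Num.sqrt (N%:R / t%:R) <= M%:R ->
  M.+1%:R / 4 <= \sum_(j < M.+1) run_success R g j.
Proof.
move=> /andP[t_gt0 t_le] M_ge.
under eq_bigr => j _ do rewrite run_success_eq.
apply: sum_sin_odd_sqr_ge; first exact: grover_angle_itv.
rewrite -(natr1 M) lerD2r; apply: le_trans M_ge.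
have /andP[q_gt0 _] := card_ratio_itv.
have inv_sin : 1 / sin th = Num.sqrt (N%:R / m%:R).
  by rewrite sin_grover_angle div1r -sqrtrV ?invf_div // ltW.
have inv_sin_le : 1 / sin th <= Num.sqrt (N%:R / t%:R).
  rewrite inv_sin ler_sqrt ?divr_ge0 ?ler0n // ler_wpM2l ?ler0n //.
  by rewrite lef_pV2 ?posrE ?ltr0n ?ler_nat // (leq_trans t_gt0).
have pi_ge2 : 2 <= pi :> R := pi_ge2 R.
have inv_sin_ge0 : 0 <= 1 / sin th by rewrite divr_ge0 // ltW // sin_grover_angle_gt0.
have -> : 1 / (2 * sin th) = 1 / 2 * (1 / sin th).
  by field; rewrite lt0r_neq0 // sin_grover_angle_gt0.
apply: ler_pM => //; lra.
Qed.

End GroverRotation.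

Section SqrtBounds.
Variable R : rcfType.

(* [1 / sqrt (t + 1) <= 2 (sqrt (t + 1) - sqrt t)]: the sum telescopes. *)
Lemma sum_inv_sqrt_le k :
  \sum_(1 <= t < k.+1) (Num.sqrt (t%:R : R))^-1 <= 2 * Num.sqrt k%:R.
Proof.
elim: k => [|k IH]; first by rewrite big_geq // mulr_ge0 ?sqrtr_ge0.
rewrite big_nat_recr //=.
set u := Num.sqrt (k.+1%:R : R); set v := Num.sqrt (k%:R : R) in IH *.
have u_gt0 : 0 < u by rewrite sqrtr_gt0 ltr0n.
have v_ge0 : 0 <= v by rewrite sqrtr_ge0.
have uv : u ^+ 2 = v ^+ 2 + 1 by rewrite !sqr_sqrtr ?ler0n // -natr1.
have inv_le : u^-1 <= 2 * (u - v).
  by rewrite -(ler_pM2l u_gt0) mulfV ?lt0r_neq0 //; nra.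
lra.
Qed.

Lemma divr_sqrt (x : R) : 0 <= x -> x / Num.sqrt x = Num.sqrt x.
Proof.
move=> x_ge0; have [sqrt0|sqrt_neq0] := eqVneq (Num.sqrt x) 0.
  by rewrite sqrt0 invr0 mulr0.
by rewrite -{1}(sqr_sqrtr x_ge0) expr2 mulfK.
Qed.

End SqrtBounds.

Section QSearchZalka.
Variables (R : realType) (T : finType).
Implicit Types (eps : R) (g : T -> bool).
Local Notation rootN := (Num.sqrt (NL T)%:R : R).

Lemma ln_ratio_ge0 eps : 0 < eps -> eps <= 1 -> 0 <= ln eps / (2 * ln (3 / 4)).
Proof.
move=> eps_gt0 eps_le1.
have : ln (3 / 4 : R) < 0 by apply: ln_lt0; apply/andP; split; lra.
by move=> ln_lt0; rewrite mulr_le0 ?ln_le0 // ltW // invr_lt0; lra.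
Qed.

Lemma t0E eps : 0 < eps -> eps <= 1 -> (t0 eps)%:R = (t0Z eps)%:~R :> R.
Proof.
move=> eps_gt0 eps_le1; have := ln_ratio_ge0 eps_gt0 eps_le1.
by rewrite /t0 natr_absz => ?; rewrite ger0_norm // ceil_ge0; lra.
Qed.

Lemma t0_ge eps : 0 < eps -> eps <= 1 -> ln eps / (2 * ln (3 / 4)) <= (t0 eps)%:R.
Proof. by move=> eps_gt0 eps_le1; rewrite t0E //; exact: ceil_ge. Qed.

Lemma expr_t0_le eps : 0 < eps -> eps <= 1 -> (3 / 4) ^+ (2 * t0 eps) <= eps.
Proof.
move=> eps_gt0 eps_le1.
have ln_lt0 : ln (3 / 4 : R) < 0 by apply: ln_lt0; apply/andP; split; lra.
rewrite -ler_ln ?posrE ?exprn_gt0 // lnXn // -(mulr_natr (ln (3 / 4))) natrM.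
have := t0_ge eps_gt0 eps_le1.
have : ln eps / (2 * ln (3 / 4)) * (2 * ln (3 / 4)) = ln eps.
  by rewrite divfK //; apply: mulf_neq0 => //; exact: ltr0_neq0.
set q := ln eps / _; nra.
Qed.

Lemma W_ZalkaE cq eps : 0 < eps -> eps <= 1 ->
  @W_Zalka R T cq eps = cq%:R * (5 * (t0 eps)%:R + pi * rootN * Num.sqrt (t0 eps)%:R).
Proof.
move=> eps_gt0 eps_le1; rewrite /W_Zalka t0E // /t0Z.
have -> : (4 / 3 : R) = (3 / 4)^-1 by rewrite invf_div.
by rewrite div1r !lnV ?posrE // ?invr_gt0 // mulrN invrN mulNr mulrN opprK.
Qed.

Lemma exact_queries_le t :
  (exact_queries R T t)%:R <= pi / 4 * (rootN / Num.sqrt t%:R) + 1.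
Proof.
have pi4_ge0 : 0 <= pi / 4 :> R by rewrite divr_ge0 ?pi_ge0.
rewrite /exact_queries natrD /nearest subrK natr_absz ger0_norm.
  by rewrite lerD2r -sqrtrV ?ler0n // -sqrtrM ?ler0n //; exact: floor_le.
by rewrite floor_ge0 mulr_ge0 ?sqrtr_ge0.
Qed.

Lemma sum_exact_queries_le k :
  \sum_(1 <= t < k.+1) (exact_queries R T t)%:R <=
    pi / 2 * rootN * Num.sqrt k%:R + k%:R.
Proof.
have pi4_ge0 : 0 <= pi / 4 :> R by rewrite divr_ge0 ?pi_ge0.
apply: le_trans (ler_sum _ (fun t _ => exact_queries_le t)) _.
rewrite big_split /= sumr_const_nat subn1 /= -mulr_sumr -mulr_sumr.
have := ler_wpM2l pi4_ge0 (ler_wpM2l (sqrtr_ge0 (NL T)%:R) (sum_inv_sqrt_le R k)).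
rewrite -[1 *+ k]/(k%:R); lra.
Qed.

Lemma Jmax_itv eps :
  (pi : R) / 4 * Num.sqrt ((NL T)%:R / (t0 eps)%:R) <= (Jmax T eps)%:R <
    pi / 4 * (rootN / Num.sqrt (t0 eps)%:R) + 1.
Proof.
have x_ge0 : 0 <= pi / 4 * Num.sqrt ((NL T)%:R / (t0 eps)%:R) :> R.
  by rewrite mulr_ge0 ?sqrtr_ge0 ?divr_ge0 ?pi_ge0.
rewrite /Jmax (natr_absz _ (Num.ceil (pi / 4 * _))) ger0_norm ?ceil_ge0; last by lra.
have /andP[ceil_lt ->] := ceil_itv (pi / 4 * Num.sqrt ((NL T)%:R / (t0 eps)%:R) : R).
by rewrite -sqrtrV ?ler0n // -sqrtrM ?ler0n //= -ltrBlDr -(intrB _ _ 1).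
Qed.

Lemma sum_run_queries_le J (js : seq nat) : all (fun j => j <= J)%N js ->
  (\sum_(j <- js) run_queries j <= size js * J.+1)%N.
Proof.
elim: js => [|j js IH] /=; first by rewrite big_nil.
by case/andP => j_le /IH; rewrite big_cons mulSn /run_queries addn1; apply: leq_add.
Qed.

Lemma sum_run_queries_t0_le eps (js : seq nat) : (size js <= 2 * t0 eps)%N ->
  all (fun j => j <= Jmax T eps)%N js ->
  (\sum_(j <- js) run_queries j)%:R <=
    pi / 2 * rootN * Num.sqrt (t0 eps)%:R + 4 * (t0 eps)%:R :> R.
Proof.
move=> size_le all_le.
have : (\sum_(j <- js) run_queries j <= 2 * t0 eps * (Jmax T eps).+1)%N.
  by apply: leq_trans (sum_run_queries_le all_le) _; rewrite leq_mul2r size_le orbT.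
rewrite -(ler_nat R) => /le_trans; apply.
have /andP[_ J_lt] := Jmax_itv eps.
have K_ge0 : 0 <= (t0 eps)%:R :> R := ler0n _ _.
rewrite !natrM -(natr1 (Jmax T eps)).
rewrite [X in _ <= X](_ : _ = 2 * (t0 eps)%:R *
    (pi / 4 * (rootN / Num.sqrt (t0 eps)%:R) + 2)); last first.
  by rewrite -{1}(divr_sqrt K_ge0); set w := (Num.sqrt _)^-1; field.
by apply: ler_wpM2l; [rewrite mulr_ge0 | lra].
Qed.

Lemma trace_oracle_uses_le eps k js : @valid_trace R T eps k js ->
  (@trace_oracle_uses R T k js)%:R <=
    5 * (t0 eps)%:R + pi * rootN * Num.sqrt (t0 eps)%:R.
Proof.
move=> [k_le _ size_le all_le].
rewrite /trace_oracle_uses natrD natr_sum.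
have step1 := sum_exact_queries_le k.
have step2 := sum_run_queries_t0_le size_le all_le.
have k_le' : k%:R <= (t0 eps)%:R :> R by rewrite ler_nat.
have : pi / 2 * rootN * Num.sqrt k%:R <= pi / 2 * rootN * Num.sqrt (t0 eps)%:R.
  by rewrite ler_wpM2l ?mulr_ge0 ?sqrtr_ge0 ?divr_ge0 ?pi_ge0 // ler_sqrt ?ler_nat.
lra.
Qed.

Lemma prod_one_minus_eq0 (p : nat -> R) s k : (0 < s <= k)%N -> p s = 1 ->
  \prod_(1 <= t < k.+1) (1 - p t) = 0.
Proof.
move=> s_itv ps1; rewrite (bigD1_seq s) ?iota_uniq //=; last by rewrite mem_index_iota ltnS.
by rewrite ps1 subrr mul0r.
Qed.

Definition step2_success g eps : R :=
  (\sum_(j < (Jmax T eps).+1) run_success R g j) / (Jmax T eps).+1%:R.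

Lemma step2_success_le1 g eps : (0 < #|[pred x | g x]|)%N -> step2_success g eps <= 1.
Proof.
move=> m_gt0; rewrite /step2_success ler_pdivrMr ?ltr0n // mul1r.
apply: le_trans (_ : _ <= \sum_(j < (Jmax T eps).+1) 1) _.
  by apply: ler_sum => j _; rewrite run_success_eq // sin2cos2 gerBl sqr_ge0.
by rewrite sumr_const card_ord.
Qed.

Lemma step2_success_ge g eps : (0 < t0 eps < #|[pred x | g x]|)%N ->
  1 / 4 <= step2_success g eps.
Proof.
move=> /andP[t0_gt0 t0_lt].
have m_gt0 : (0 < #|[pred x | g x]|)%N by apply: leq_ltn_trans t0_lt.
have /andP[J_ge _] := Jmax_itv eps.
rewrite /step2_success ler_pdivlMr ?ltr0n // mul1r mulrC.
apply: (sum_run_success_ge m_gt0); last exact: J_ge.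
by rewrite t0_gt0 ltnW.
Qed.

Lemma step2_fail_le g eps : 0 < eps -> eps <= 1 -> (t0 eps < #|[pred x | g x]|)%N ->
  (1 - step2_success g eps) ^+ (2 * t0 eps) <= eps.
Proof.
move=> eps_gt0 eps_le1 t0_lt.
apply: le_trans (expr_t0_le eps_gt0 eps_le1).
have [->|t0_gt0] := posnP (t0 eps); first by rewrite muln0 !expr0.
have A_ge : 1 / 4 <= step2_success g eps by apply: step2_success_ge; rewrite t0_gt0.
have A_le1 : step2_success g eps <= 1.
  by apply: step2_success_le1; apply: leq_ltn_trans t0_lt.
by apply: lerXn2r; rewrite ?nnegrE; lra.
Qed.

Lemma fail_prob_le g (p : nat -> R) eps : 0 < eps -> eps <= 1 ->
  (forall t, 0 <= p t <= 1) ->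
  (forall t, (0 < t)%N -> #|[pred x | g x]| = t -> p t = 1) ->
  (exists x, g x) -> fail_prob g p eps <= eps.
Proof.
move=> eps_gt0 eps_le1 p_itv p_exact [x gx].
have m_gt0 : (0 < #|[pred x | g x]|)%N by apply/card_gt0P; exists x.
rewrite /fail_prob -/(step2_success g eps).
have [m_le|t0_lt] := leqP #|[pred x | g x]| (t0 eps).
  by rewrite (prod_one_minus_eq0 _ (p_exact _ m_gt0 erefl)) ?m_gt0 // mul0r ltW.
apply: le_trans (step2_fail_le eps_gt0 eps_le1 t0_lt).
apply: ler_piMl; first by apply/exprn_ge0; rewrite subr_ge0; exact: step2_success_le1.
apply: prodr_ile1 => t _; have /andP[p_ge0 p_le1] := p_itv t.
by rewrite subr_ge0 gerBl p_ge0 p_le1.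
Qed.

End QSearchZalka.

Theorem lemma5 (R : realType) (T : finType) (g : T -> bool) (eps : R)
    (cq : nat) (p : nat -> R) :
  0 < eps -> eps <= 1 ->
  (forall t, 0 <= p t <= 1) ->
  (forall t, (0 < t)%N -> #|[pred x | g x]| = t -> p t = 1) ->
  (forall (k : nat) (js : seq nat), @valid_trace R T eps k js ->
     (cq * @trace_oracle_uses R T k js)%:R <= @W_Zalka R T cq eps) /\
  ((exists x, g x) -> fail_prob g p eps <= eps).
Proof.
move=> eps_gt0 eps_le1 p_itv p_exact; split; last exact: fail_prob_le.
move=> k js trace; rewrite natrM W_ZalkaE //.
by rewrite ler_wpM2l ?ler0n // trace_oracle_uses_le.
Qed.
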